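(* In a type-theoretic fibration category, if $f:A\to B$ and $g:B\to C$ are morphisms such that $gf$ and $g$ are acyclic cofibrations, then $f$ is an acyclic cofibration.
   Context: A type-theoretic fibration category is a category with a terminal object $1$ and a subcategory of morphisms called fibrations, containing all isomorphisms and all morphisms with codomain $1$, such that: all pullbacks of fibrations exist and are fibrations; the dependent product of a fibration along a fibration exists and is a fibration; and every morphism factors as an acyclic cofibration followed by a fibration. An acyclic cofibration is a morphism with the left lifting property with respect to all fibrations. *)

Set Implicit Arguments.
Set Universe Polymorphism.

Record Category := {
  Ob :> Type;
  Hom : Ob -> Ob -> Type;
  idm : forall X, Hom X X;
  comp : forall X Y Z, Hom Y Z -> Hom X Y -> Hom X Z;
  comp_assoc : forall W X Y Z (h : Hom Y Z) (g : Hom X Y) (f : Hom W X),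
      comp h (comp g f) = comp (comp h g) f;
  comp_id_l : forall X Y (f : Hom X Y), comp (idm Y) f = f;
  comp_id_r : forall X Y (f : Hom X Y), comp f (idm X) = f
}.

Arguments Hom {c} _ _.
Arguments idm {c} _.
Arguments comp {c X Y Z} _ _.

Section Defs.
Context {C : Category}.

Definition is_terminal (T : C) : Prop :=
  forall X : C, exists t : Hom X T, forall t' : Hom X T, t' = t.

Definition is_iso {X Y : C} (f : Hom X Y) : Prop :=
  exists g : Hom Y X, comp g f = idm X /\ comp f g = idm Y.

Definition is_pullback {A B D P : C} (f : Hom A D) (g : Hom B D)
    (pa : Hom P A) (pb : Hom P B) : Prop :=
  comp f pa = comp g pb /\
  forall (Z : C) (za : Hom Z A) (zb : Hom Z B), comp f za = comp g zb ->
    exists z : Hom Z P, (comp pa z = za /\ comp pb z = zb) /\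
      forall z' : Hom Z P, comp pa z' = za /\ comp pb z' = zb -> z' = z.

Definition morclass := forall X Y : C, Hom X Y -> Prop.

Definition llp {A B X Y : C} (i : Hom A B) (p : Hom X Y) : Prop :=
  forall (u : Hom A X) (v : Hom B Y), comp p u = comp v i ->
    exists d : Hom B X, comp d i = u /\ comp p d = v.

Definition acyclic_cof (fib : morclass) {A B : C} (i : Hom A B) : Prop :=
  forall (X Y : C) (p : Hom X Y), fib X Y p -> llp i p.

(* Dependent product of the fibration p : E -> X along the fibration
   f : X -> Y: an object Pi with pi : Pi -> Y, a pullback Q of pi along f
   (qpi : Q -> Pi, qx : Q -> X) and an evaluation ev : Q -> E over X, which
   is universal (Pi is the value at p of a right adjoint to pullback along f):
   for every q : Z -> Y, every pullback P of q along f, and every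
   h : P -> E over X, there is a unique k : Z -> Pi over Y such that
   ev composed with the induced map P -> Q equals h. *)
Definition is_dep_prod {E X Y : C} (p : Hom E X) (f : Hom X Y)
    (Pi : C) (pi : Hom Pi Y) (Q : C) (qpi : Hom Q Pi) (qx : Hom Q X)
    (ev : Hom Q E) : Prop :=
  is_pullback pi f qpi qx /\ comp p ev = qx /\
  forall (Z : C) (q : Hom Z Y) (P : C) (pz : Hom P Z) (px : Hom P X),
    is_pullback q f pz px ->
    forall h : Hom P E, comp p h = px ->
      exists k : Hom Z Pi,
        (comp pi k = q /\
         exists m : Hom P Q, comp qpi m = comp k pz /\ comp qx m = px /\
                             comp ev m = h) /\
        forall k' : Hom Z Pi,
          (comp pi k' = q /\
           exists m : Hom P Q, comp qpi m = comp k' pz /\ comp qx m = px /\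
                               comp ev m = h) -> k' = k.

End Defs.
Arguments is_dep_prod {C E X Y} p f Pi pi Q qpi qx ev.

Record TTFC (C : Category) := {
  one : C;
  one_terminal : is_terminal one;
  fib : @morclass C;
  fib_id : forall X : C, fib X X (idm X);
  fib_comp : forall (X Y Z : C) (f : Hom X Y) (g : Hom Y Z),
      fib X Y f -> fib Y Z g -> fib X Z (comp g f);
  fib_iso : forall (X Y : C) (f : Hom X Y), is_iso f -> fib X Y f;
  fib_to_one : forall (X : C) (f : Hom X one), fib X one f;
  fib_pullback : forall (E X Y : C) (p : Hom E Y) (f : Hom X Y), fib E Y p ->
      exists (P : C) (pe : Hom P E) (px : Hom P X),
        is_pullback p f pe px /\ fib P X px;
  fib_dep_prod : forall (E X Y : C) (p : Hom E X) (f : Hom X Y),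
      fib E X p -> fib X Y f ->
      exists (Pi : C) (pi : Hom Pi Y) (Q : C) (qpi : Hom Q Pi) (qx : Hom Q X)
             (ev : Hom Q E),
        is_dep_prod p f Pi pi Q qpi qx ev /\ fib Pi Y pi;
  factorization : forall (X Y : C) (f : Hom X Y),
      exists (M : C) (i : Hom X M) (q : Hom M Y),
        acyclic_cof fib i /\ fib M Y q /\ comp q i = f
}.

(* Since [B -> 1] is a fibration, lifting against it gives a retraction [r] of [g].
   A square [p u = v f] is then pulled back along [v r : D -> Y]: the pullback
   leg [P -> D] is a fibration, so [g f] lifts against it, and a section
   [s : D -> P] with [s (g f)] equal to the map [A -> P] induced by [u] yields
   the diagonal [pe s g] for [f]. *)

Arguments comp_assoc {c W X Y Z} h g f.
Arguments comp_id_l {c X Y} f.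
Arguments comp_id_r {c X Y} f.

Section Lifting.
Context {C : Category}.

Lemma retraction_of_llp_terminal {T A B : C} (i : Hom A B) (t : Hom A T) :
  is_terminal T -> llp i t -> exists r : Hom B A, comp r i = idm A.
Proof.
  intros HT Hi.
  destruct (HT B) as [tB _].
  destruct (HT A) as [tA HtA].
  destruct (Hi (idm A) tB) as [r [Hr _]].
  - rewrite (HtA (comp t (idm A))). symmetry. apply HtA.
  - exists r. exact Hr.
Qed.

Lemma llp_of_retraction_pullback {A B D X Y P : C}
    (f : Hom A B) (g : Hom B D) (r : Hom D B) (p : Hom X Y) (v : Hom B Y)
    (pe : Hom P X) (pd : Hom P D) :
  comp r g = idm B -> is_pullback p (comp v r) pe pd ->
  llp (comp g f) pd -> forall u : Hom A X, comp p u = comp v f ->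
  exists d : Hom B X, comp d f = u /\ comp p d = v.
Proof.
  intros Hr [Hpb Huniv] Hlift u Hsq.
  destruct (Huniv A u (comp g f)) as [a [[Ha_pe Ha_pd] _]].
  { rewrite Hsq, <- (comp_assoc v r), (comp_assoc r g f), Hr, comp_id_l.
    reflexivity. }
  destruct (Hlift a (idm D)) as [s [Hs_a Hs_pd]].
  { rewrite Ha_pd, comp_id_l. reflexivity. }
  exists (comp pe (comp s g)). split.
  - rewrite <- comp_assoc, <- (comp_assoc s g f), Hs_a, Ha_pe. reflexivity.
  - rewrite (comp_assoc p pe), Hpb, <- (comp_assoc (comp v r) pd),
      (comp_assoc pd s g), Hs_pd, comp_id_l, <- (comp_assoc v r g), Hr, comp_id_r.
    reflexivity.
Qed.

End Lifting.

Theorem lemma7p3 (C : Category) (T : TTFC C) (A B D : C)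
    (f : Hom A B) (g : Hom B D) :
  acyclic_cof (fib T) (comp g f) -> acyclic_cof (fib T) g ->
  acyclic_cof (fib T) f.
Proof.
  intros Hgf Hg X Y p Hp u v Hsq.
  destruct (one_terminal T B) as [tB _].
  destruct (retraction_of_llp_terminal g tB (one_terminal T) (Hg _ _ tB (fib_to_one T B tB)))
    as [r Hr].
  destruct (fib_pullback T X D Y p (comp v r) Hp) as [P [pe [pd [Hpb Hpd]]]].
  exact (llp_of_retraction_pullback f g r p v pe pd Hr Hpb (Hgf _ _ pd Hpd) u Hsq).
Qed.
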